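(* Let $\underline{x}\le\overline{x}$, $\underline{y}\le\overline{y}$, $\underline{z}\le\overline{z}$ be real numbers and $\ell,\ell',\ell''\in\mathbb{Z}$. Let $f:[\underline{x};\overline{x}]\to[\underline{y};\overline{y}]$ and $g:[\underline{y};\overline{y}]\to[\underline{z};\overline{z}]$ be functions such that $f$ is pseudo-injective with input LSB $\ell$ and output LSB $\ell'$, and $g$ is pseudo-injective with input LSB $\ell'$ and output LSB $\ell''$. Then $g\circ f:[\underline{x};\overline{x}]\to[\underline{z};\overline{z}]$ is pseudo-injective with input LSB $\ell$ and output LSB $\ell''$.
   Context: For $\ell\in\mathbb{Z}$, write $u=2^\ell$ and, for a real $x$, $\lfloor x\rfloor_\ell = u\cdot\lfloor x/u\rfloor$ (rounding down to the nearest multiple of $2^\ell$). For a function $h:[a;b]\to\mathbb{R}$ and integers $\ell,\ell'$, the input LSB $\ell$ and output LSB $\ell'$ of $h$ are said to respect the pseudo-injectivity condition (equivalently, $h$ is pseudo-injective with input LSB $\ell$ and output LSB $\ell'$) if for all $x_1,x_2\in[a;b]$ with $\lfloor x_1\rfloor_\ell\neq\lfloor x_2\rfloor_\ell$, we have $\lfloor h(x_1)\rfloor_{\ell'}\neq\lfloor h(x_2)\rfloor_{\ell'}$ or $h(x_1)=h(x_2)$. *)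

From Stdlib Require Import Reals ZArith.
Open Scope R_scope.

(* floor x  =  largest integer <= x  (Stdlib's Int_part is up x - 1, i.e. the floor) *)
Definition floorR (x : R) : Z := Int_part x.

Definition rnd_down (l : Z) (x : R) : R :=
  powerRZ 2 l * IZR (floorR (x / powerRZ 2 l)).

Definition pseudo_injective (a b : R) (h : R -> R) (l l' : Z) : Prop :=
  forall x1 x2 : R, a <= x1 <= b -> a <= x2 <= b ->
    rnd_down l x1 <> rnd_down l x2 ->
    rnd_down l' (h x1) <> rnd_down l' (h x2) \/ h x1 = h x2.

From Stdlib Require Import Reals ZArith.
Open Scope R_scope.

(* If [f x1] and [f x2] have distinct roundings then [g] separates them;
   otherwise [f x1 = f x2], hence [g (f x1) = g (f x2)]. *)
Lemma pseudo_injective_comp (xl xh yl yh : R) (l l' l'' : Z) (f g : R -> R) :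
  (forall x, xl <= x <= xh -> yl <= f x <= yh) ->
  pseudo_injective xl xh f l l' ->
  pseudo_injective yl yh g l' l'' ->
  pseudo_injective xl xh (fun x => g (f x)) l l''.
Proof.
  intros f_range Pf Pg x1 x2 Hx1 Hx2 Hrnd.
  destruct (Pf x1 x2 Hx1 Hx2 Hrnd) as [Hrnd_f | Hf_eq].
  - exact (Pg (f x1) (f x2) (f_range x1 Hx1) (f_range x2 Hx2) Hrnd_f).
  - right; now rewrite Hf_eq.
Qed.

Theorem mainTheorem1 (xl xh yl yh zl zh : R) (l l' l'' : Z) (f g : R -> R) :
  xl <= xh -> yl <= yh -> zl <= zh ->
  (forall x, xl <= x <= xh -> yl <= f x <= yh) ->
  (forall y, yl <= y <= yh -> zl <= g y <= zh) ->
  pseudo_injective xl xh f l l' ->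
  pseudo_injective yl yh g l' l'' ->
  pseudo_injective xl xh (fun x => g (f x)) l l''.
Proof.
  intros _ _ _ f_range _.
  exact (pseudo_injective_comp _ _ _ _ l l' l'' f g f_range).
Qed.
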